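(* Let $h=(I,E)$ be a hypergraph with $|I|=d$, and let $\chi_d(h)$ be the polynomial which agrees, for $m\in\mathbb{Z}_{>0}$, with the number of proper colorings of $h$ with $m$ colors. Then for every $m\in\mathbb{Z}_{>0}$, $$(-1)^d\chi_d(h)(-m)=\#\{(\varsigma,c):\ \varsigma\text{ an acyclic heading of }h,\ c:I\to[m]\text{ a coloring compatible with }\varsigma\}.$$ In particular, the number of acyclic headings of $h$ equals $(-1)^d\chi_d(h)(-1)$.
   Context: A hypergraph $h=(I,E)$ consists of a finite set $I$ of nodes and a finite multiset $E$ of nonempty subsets of $I$ (hyperedges). A coloring with $m$ colors is any map $c:I\to[m]=\{1,\dots,m\}$ (not necessarily proper); it is proper if every hyperedge $e$ contains exactly one node $i$ with $c(i)=\max_{j\in e}c(j)$. A heading is a map $\varsigma:E\to I$ with $\varsigma(e)\in e$ for every $e$. An oriented cycle in $\varsigma$ is a sequence of hyperedges $e_1,\dots,e_\ell$ with $\varsigma(e_j)\in e_{j+1}\setminus\{\varsigma(e_{j+1})\}$ for all $j$, indices modulo $\ell$; $\varsigma$ is acyclic if it has no oriented cycle. A coloring $c$ and a heading $\varsigma$ are compatible if $c(\varsigma(e))=\max_{j\in e}c(j)$ for every $e\in E$. *)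

(* Hypergraph h = (I, E): I a finType of nodes, E a finType
   indexing the hyperedges (so E is a multiset of subsets: distinct indices may
   carry the same subset), edge : E -> {set I}. *)
From HB Require Import structures.
From mathcomp Require Import all_boot all_order all_algebra.
From mathcomp Require Import boolp.
Set Implicit Arguments. Unset Strict Implicit. Unset Printing Implicit Defensive.
Import Order.TTheory GRing.Theory Num.Theory.

Section Hyper.
Variables (I E : finType) (edge : E -> {set I}).

(* Colors [m] = {1..m} are represented by 'I_m = {0..m-1} (order-isomorphic). *)
Definition emax (m : nat) (c : {ffun I -> 'I_m}) (e : E) : nat :=
  \max_(j in edge e) (c j : nat).

Definition proper_coloring (m : nat) (c : {ffun I -> 'I_m}) : bool :=
  [forall e : E, #|[set i in edge e | (c i : nat) == emax c e]| == 1].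

Definition heading (s : {ffun E -> I}) : Prop := forall e, s e \in edge e.

Definition oriented_cycle (s : {ffun E -> I}) (l : nat) (f : nat -> E) : Prop :=
  0 < l /\
  forall j, j < l -> s (f j) \in edge (f (j.+1 %% l)) :\ s (f (j.+1 %% l)).

Definition acyclic (s : {ffun E -> I}) : Prop :=
  ~ (exists l f, oriented_cycle s l f).

Definition compatible (m : nat) (c : {ffun I -> 'I_m}) (s : {ffun E -> I}) : Prop :=
  forall e, (c (s e) : nat) = emax c e.

Definition n_proper (m : nat) : nat := #|[set c : {ffun I -> 'I_m} | proper_coloring c]|.

Definition n_pairs (m : nat) : nat :=
  #|[set p : {ffun E -> I} * {ffun I -> 'I_m} |
      `[< heading p.1 /\ acyclic p.1 /\ compatible p.2 p.1 >] ]|.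

Definition n_acyclic_headings : nat :=
  #|[set s : {ffun E -> I} | `[< heading s /\ acyclic s >] ]|.
End Hyper.

From HB Require Import structures.
From mathcomp Require Import all_boot all_order all_algebra.
From mathcomp Require Import ring boolp.
Import Order.TTheory GRing.Theory Num.Theory.
Set Implicit Arguments. Unset Strict Implicit. Unset Printing Implicit Defensive.

(* For a heading s write i -> j when some hyperedge e has s e = j, i \in e and
   i != j (the head relation of s).  A coloring is proper iff it is strictly
   increasing along the head relation of some heading, which is then unique (it
   picks the argmax of every hyperedge) and acyclic; a coloring is compatible
   with s iff it is weakly increasing along it.  So n_proper m and n_pairs m
   are sums, over the acyclic headings s, of the numbers of strictly resp.
   weakly increasing maps to m colors along the head relation of s.

   For a relation in which every nonempty set has a sink (an acyclic relation),
   Stanley's reciprocity holds: some polynomial p_V satisfies p_V(m) = #strict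
   maps V -> [m] and (-1)^|V| p_V(-m) = #weak maps V -> [m].  By induction on V:
   removing the vertices of top color gives
     Strict_V(m+1) = \sum_(U <= sinks V) Strict_(V\U)(m),
   and inclusion-exclusion over the sinks of top color gives
     \sum_(U <= sinks V) (-1)^|U| Weak_(V\U)(m+1) = Weak_V(m);
   p_V is then a discrete antiderivative of the p_(V\U), and both identities
   follow by induction on m.  The chromatic polynomial is the sum of the p_s;
   it is unique since it is determined by its values at positive integers, and
   acyclic headings are the pairs with a single color. *)

Lemma card_bij (T1 T2 : finType) (A : {set T1}) (B : {set T2})
    (f : T1 -> T2) (g : T2 -> T1) :
  {in A, forall x, f x \in B} -> {in B, forall y, g y \in A} ->
  {in A, cancel f g} -> {in B, cancel g f} -> #|A| = #|B|.
Proof.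
move=> fA gB fK gK; apply/eqP; rewrite eqn_leq; apply/andP; split.
  rewrite -(card_in_imset (can_in_inj fK)); apply: subset_leq_card.
  by apply/subsetP => _ /imsetP [x xA ->]; apply: fA.
rewrite -(card_in_imset (can_in_inj gK)); apply: subset_leq_card.
by apply/subsetP => _ /imsetP [y yB ->]; apply: gB.
Qed.

Lemma card_pairs (T1 T2 : finType) (P : pred T1) (Q : T1 -> pred T2) :
  #|[set p : T1 * T2 | P p.1 && Q p.1 p.2]| = \sum_(a | P a) #|[set b | Q a b]|.
Proof.
rewrite -sum1dep_card -(pair_big_dep P Q (fun _ _ => 1)).
by apply: eq_bigr => a _; rewrite sum1dep_card.
Qed.

Section InclusionExclusion.
Variable R : ringType.
Local Open Scope ring_scope.

(* The alternating sum over the subsets of A vanishes unless A is empty: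
   grouping the subsets by size it is (1 - 1) ^ #|A|. *)
Lemma sum_subsets_sign (T : finType) (A : {set T}) :
  \sum_(U : {set T} | U \subset A) (-1 : R) ^+ #|U| = (A == set0)%:R.
Proof.
pose n := #|A|.
rewrite (partition_big (fun U : {set T} => inord #|U| : 'I_n.+1) xpredT) //=.
transitivity (\sum_(k < n.+1) (-1 : R) ^+ k *+ 'C(n, k)).
  apply: eq_bigr => k _; rewrite -cards_draws -sumr_const; apply: eq_big => [U|U].
    rewrite inE; apply/andP/andP => -[sUA /eqP Uk]; split => //; apply/eqP.
      by rewrite -Uk inordK // ltnS subset_leq_card.
    by rewrite Uk inord_val.
  by move=> /andP [sUA /eqP <-]; rewrite inordK // ltnS subset_leq_card.
by rewrite -exprD1n addNr expr0n -cards_eq0; case: (n =P 0%N).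
Qed.

Lemma card_sep_sum (X : finType) (W : {set X}) (P : pred X) :
  #|[set x in W | P x]|%:R = \sum_(x in W) (P x)%:R :> R.
Proof.
rewrite -sum1_card natr_sum big_mkcond [RHS]big_mkcond; apply: eq_bigr => x _.
by rewrite inE; case: (x \in W); case: (P x).
Qed.

Lemma inclusion_exclusion (T X : finType) (S : {set T}) (A : X -> {set T})
    (W : {set X}) :
  (forall x, A x \subset S) ->
  \sum_(U : {set T} | U \subset S) (-1 : R) ^+ #|U| * #|[set x in W | U \subset A x]|%:R
  = #|[set x in W | A x == set0]|%:R.
Proof.
move=> AS; rewrite card_sep_sum.
under eq_bigr => U _ do rewrite card_sep_sum mulr_sumr.
rewrite exchange_big; apply: eq_bigr => x _.
rewrite -sum_subsets_sign big_mkcond [RHS]big_mkcond; apply: eq_bigr => U _.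
have [sUA|nsUA] := boolP (U \subset A x); last by rewrite mulr0; case: ifP.
by rewrite (subset_trans sUA (AS x)) mulr1.
Qed.
End InclusionExclusion.

Section DiscreteCalculus.
Variable R : numFieldType.
Local Open Scope ring_scope.

Definition binpoly (k : nat) : {poly R} :=
  (k`!%:R)^-1 *: \prod_(i < k) ('X - (i%:R)%:P).

Lemma fact_neq0 k : (k`!%:R : R) != 0.
Proof. by rewrite pnatr_eq0 -lt0n fact_gt0. Qed.

Lemma size_binpoly k : size (binpoly k) = k.+1.
Proof.
by rewrite size_scale ?invr_eq0 ?fact_neq0 // -big_enum size_prod_XsubC size_enum_ord.
Qed.

Lemma lead_coef_binpoly k : lead_coef (binpoly k) = (k`!%:R)^-1.
Proof. by rewrite lead_coefZ lead_coef_prod_XsubC mulr1. Qed.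

Lemma binpoly0 k : (binpoly k.+1).[0] = 0.
Proof.
by rewrite hornerZ horner_prod big_ord_recl /= hornerXsubC subrr mul0r mulr0.
Qed.

Lemma binpoly_diff k x :
  (binpoly k.+1).[x + 1] - (binpoly k.+1).[x] = (binpoly k).[x].
Proof.
have evalP (y : R) n : (\prod_(i < n) ('X - (i%:R)%:P)).[y] = \prod_(i < n) (y - i%:R).
  by rewrite horner_prod; apply: eq_bigr => i _; rewrite hornerXsubC.
rewrite !hornerZ !evalP big_ord_recl big_ord_recr /=.
under eq_bigr => i _ do rewrite /bump leq0n add1n -natr1 opprD addrACA subrr addr0.
set P := \prod_(i < k) _; rewrite factS natrM -natr1.
rewrite -mulrBr (_ : _ - _ = (k%:R + 1) * P); last by ring.
by rewrite [_ * k`!%:R]mulrC invfM -mulrA mulKf // natr1 pnatr_eq0.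
Qed.

(* Every polynomial q has a discrete antiderivative p: p(x + 1) - p(x) = q(x).
   By induction on the size of q, cancelling its leading term with a multiple
   of a binomial polynomial. *)
Lemma discrete_antiderivative (q : {poly R}) :
  exists p : {poly R}, p.[0] = 0 /\ forall x, p.[x + 1] - p.[x] = q.[x].
Proof.
move: {2}(size q) (leqnn (size q)) => n; elim: n q => [|n IHn] q szq.
  exists 0; move: szq; rewrite size_poly_leq0 => /eqP ->.
  by split=> [|x]; rewrite !horner0 ?subr0.
have [/IHn //|szq_gt] := leqP (size q) n.
have szq_n : size q = n.+1 by apply/eqP; rewrite eqn_leq szq szq_gt.
pose c := lead_coef q * n`!%:R.
have [p [p0 dp]] : exists p : {poly R}, p.[0] = 0 /\
    forall x, p.[x + 1] - p.[x] = (q - c *: binpoly n).[x].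
  apply: IHn; apply/leq_sizeP => j; rewrite leq_eqVlt => /orP [/eqP <-|ltj].
    rewrite coefB coefZ.
    have -> : q`_n = lead_coef q by rewrite lead_coefE szq_n.
    have -> : (binpoly n)`_n = lead_coef (binpoly n) by rewrite lead_coefE size_binpoly.
    by rewrite lead_coef_binpoly /c mulfK ?fact_neq0 ?subrr.
  by rewrite coefB coefZ !nth_default ?mulr0 ?subrr ?size_binpoly ?szq_n.
exists (p + c *: binpoly n.+1); split=> [|x].
  by rewrite hornerD hornerZ p0 binpoly0 mulr0 addr0.
rewrite !hornerD !(hornerZ c) opprD addrACA dp -mulrBr binpoly_diff.
by rewrite hornerD hornerN (hornerZ c) subrK.
Qed.

Lemma poly_eq_nat (p q : {poly R}) :
  (forall m : nat, (0 < m)%N -> p.[m%:R] = q.[m%:R]) -> p = q.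
Proof.
move=> Hpq; apply/eqP; rewrite -subr_eq0; apply/negPn/negP => nz.
suff: (size (p - q)%R < size (p - q)%R)%N by rewrite ltnn.
rewrite -[X in (X < _)%N](size_iota 0) -(size_map (fun i => i.+1%:R : R)).
apply: max_poly_roots nz _ _.
  by apply/allP => _ /mapP [i _ ->]; rewrite /root hornerD hornerN Hpq ?subrr.
by rewrite map_inj_uniq ?iota_uniq // => i j /eqP; rewrite eqr_nat => /eqP [].
Qed.
End DiscreteCalculus.

Section Relations.
Variables (I : finType) (r : rel I).
Implicit Types (V X : {set I}) (cmp : rel nat).

Definition monotone n cmp V (c : {ffun I -> 'I_n}) : bool :=
  [forall i in V, forall j in V, r i j ==> cmp (c i) (c j)].

Lemma monotoneP n cmp V (c : {ffun I -> 'I_n}) :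
  reflect (forall i j, i \in V -> j \in V -> r i j -> cmp (c i) (c j))
          (monotone cmp V c).
Proof.
apply: (iffP forall_inP) => [H i j iV jV rij | H i iV].
  by move/forall_inP: (H i iV) => /(_ j jV) /implyP; apply.
by apply/forall_inP => j jV; apply/implyP; apply: H.
Qed.

Definition sinks V : {set I} := [set v in V | [forall w in V, ~~ r v w]].

Lemma sinksP V v : reflect (v \in V /\ forall w, w \in V -> ~~ r v w) (v \in sinks V).
Proof.
rewrite inE; apply: (iffP andP) => -[vV H]; split=> //.
  by move=> w; move/forall_inP: H; apply.
by apply/forall_inP.
Qed.

Lemma sinks_sub V : sinks V \subset V.
Proof. by apply/subsetP => v /sinksP []. Qed.

(* r is acyclic: every nonempty set of vertices contains a sink. *)
Definition sink_founded : Prop :=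
  forall X, X != set0 -> exists2 v, v \in X & forall w, w \in X -> ~~ r v w.

(* Conversely, if no vertex of a nonempty X is a sink of X, then r has a closed
   walk inside X: iterating a successor function must revisit a vertex. *)
Lemma periodic_walk X :
  X != set0 -> (forall v, v \in X -> exists2 w, w \in X & r v w) ->
  exists l (y : nat -> I),
    [/\ 0 < l, forall k, r (y k) (y k.+1) & forall a b, a = b %[mod l] -> y a = y b].
Proof.
move=> /set0Pn [v0 v0X] succ.
pose g v := odflt v [pick w in X | r v w].
have gX v : v \in X -> g v \in X /\ r v (g v).
  move=> vX; rewrite /g; case: pickP => [w /andP [wX rvw] // | none].
  by case: (succ v vX) => w wX rvw; move: (none w); rewrite wX rvw.
pose x k := iter k g v0.
have xX k : x k \in X by elim: k => //= k IH; case: (gX _ IH).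
have : looping g v0 #|I|.
  apply: contraFT (ltnn #|I|); rewrite -looping_uniq => /card_uniqP.
  by rewrite size_traject => <-; apply: max_card.
case/trajectP => a ltaI loop; set l := #|I| - a.
have xl k : x (a + k + l) = x (a + k).
  have al : a + l = #|I| by rewrite subnKC // ltnW.
  by rewrite /x -addnA [k + l]addnC addnA al addnC iterD loop -iterD addnC.
exists l, (fun k => x (a + k)); split=> [|k|]; first by rewrite subn_gt0.
  by rewrite addnS; case: (gX _ (xX (a + k))).
suff xmod k : x (a + k) = x (a + k %% l) by move=> i j eqij; rewrite xmod eqij -xmod.
rewrite {1}(divn_eq k l); elim: (k %/ l) => [|q IH]; first by rewrite add0n.
by rewrite mulSn -addnA addnCA addnC xl.
Qed.
End Relations.

(* Colorings of a subset V of the vertices with colors 1..m are encoded as maps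
   c : I -> 'I_K.+1 with c i = 0 exactly outside V, for a fixed bound K >= m
   on the colors; this lets V and m vary while the type stays fixed. *)
Section ColoringCounts.
Variables (I : finType) (r : rel I) (K : nat).
Implicit Types (V U : {set I}) (cmp : rel nat) (m : nat) (c : {ffun I -> 'I_K.+1}).

Definition colors_on V m c : bool :=
  [forall i, ((0 < c i) == (i \in V)) && (c i <= m)].

Lemma colors_onP V m c :
  reflect ((forall i, (0 < c i) = (i \in V)) /\ (forall i, c i <= m)) (colors_on V m c).
Proof.
apply: (iffP forallP) => [H|[pos le] i]; last by rewrite pos eqxx le.
by split=> i; case/andP: (H i) => // /eqP.
Qed.

(* The cmp-monotone colorings of V with m colors, and their number: for cmp = ltn
   (strict) and cmp = leq (weak) these are the two order polynomials of r on V. *)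
Definition colorings cmp V m : {set {ffun I -> 'I_K.+1}} :=
  [set c | colors_on V m c && monotone r cmp V c].

Definition n_colorings cmp V m : nat := #|colorings cmp V m|.

Lemma n_colorings0 cmp V : n_colorings cmp V 0 = (V == set0).
Proof.
have [-> | /set0Pn [v vV]] := eqVneq V set0.
  apply: (@eq_card1 _ [ffun => ord0]) => c; rewrite !inE.
  have -> : monotone r cmp set0 c by apply/monotoneP => i; rewrite inE.
  rewrite andbT; apply/colors_onP/eqP => [[_ le0] | ->].
    by apply/ffunP => i; apply/val_inj; rewrite ffunE /=; apply/eqP; rewrite -leqn0.
  by split=> i; rewrite ffunE // inE.
apply: eq_card0 => c; rewrite !inE; apply/negP => /andP [/colors_onP [pos le] _].
by move: (le v) (pos v); rewrite leqn0 vV => /eqP ->.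
Qed.

(* recolor U b c gives color b to the vertices of U.  With b = 0 it removes U
   from the colored set; with b the top color it puts U back. *)
Definition recolor U (b : nat) c : {ffun I -> 'I_K.+1} :=
  [ffun i => if i \in U then inord b else c i].

Lemma recolorE U b c i : b <= K ->
  recolor U b c i = (if i \in U then b else c i) :> nat.
Proof. by move=> bK; rewrite ffunE; case: ifP => // _; rewrite inordK. Qed.

Lemma recolor_id U b c : b <= K -> {in U, forall u, c u = b :> nat} -> recolor U b c = c.
Proof.
move=> bK cU; apply/ffunP => i; apply: val_inj => /=; rewrite recolorE //.
by case: ifPn => // /cU ->.
Qed.

Lemma recolor_idem U a b c : recolor U a (recolor U b c) = recolor U a c.
Proof. by apply/ffunP => i; rewrite !ffunE; case: (i \in U). Qed.

Lemma card_recolor (P Q : pred {ffun I -> 'I_K.+1}) U a b : a <= K -> b <= K ->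
  (forall c, P c -> Q (recolor U b c)) -> (forall c, Q c -> P (recolor U a c)) ->
  (forall c, P c -> {in U, forall u, c u = a :> nat}) ->
  (forall c, Q c -> {in U, forall u, c u = b :> nat}) ->
  #|[set c | P c]| = #|[set c | Q c]|.
Proof.
move=> aK bK PQ QP Pa Qb.
apply: (card_bij (f := recolor U b) (g := recolor U a)) => c; rewrite !inE.
- exact: PQ.
- exact: QP.
- by move=> Pc; rewrite recolor_idem recolor_id //; apply: Pa.
- by move=> Qc; rewrite recolor_idem recolor_id //; apply: Qb.
Qed.

Lemma colors_on_clear V U m m' c : colors_on V m c -> {in ~: U, forall i, c i <= m'} ->
  colors_on (V :\: U) m' (recolor U 0 c).
Proof.
move=> /colors_onP [pos le] le'; apply/colors_onP; split=> i; rewrite recolorE //.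
  by rewrite inE; case: ifP => iU //=; rewrite pos.
by case: ifPn => // iU; apply: le'; rewrite inE.
Qed.

Lemma colors_on_fill V U m b c : U \subset V -> 0 < b <= K -> m <= b ->
  colors_on (V :\: U) m c -> colors_on V b (recolor U b c).
Proof.
move=> UV /andP [b0 bK] mb /colors_onP [pos le]; apply/colors_onP; split=> i;
  rewrite recolorE //; case: ifPn => iU //.
- by rewrite b0 (subsetP UV).
- by rewrite pos inE iU.
- exact: leq_trans (le i) mb.
Qed.

Lemma monotone_clear cmp V U a c : monotone r cmp V c ->
  monotone r cmp (V :\: U) (recolor U a c).
Proof.
move=> /monotoneP mon; apply/monotoneP => i j; rewrite !inE !ffunE.
by move=> /andP [/negPf -> iV] /andP [/negPf -> jV]; apply: mon.
Qed.

Lemma monotone_fill cmp V U b c : U \subset sinks r V -> b <= K ->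
  {in V :\: U, forall i, cmp (c i) b} ->
  monotone r cmp (V :\: U) c -> monotone r cmp V (recolor U b c).
Proof.
move=> US bK top /monotoneP mon; apply/monotoneP => i j iV jV rij.
rewrite !recolorE //; case: ifPn => [/(subsetP US) /sinksP [_ /(_ j jV)] | iU].
  by rewrite rij.
have iVU : i \in V :\: U by rewrite inE iU.
by case: ifPn => jU; [apply: top | apply: mon => //; rewrite inE jU].
Qed.

Definition top_set m c : {set I} := [set i | c i == m :> nat].

(* In a strict coloring the vertices of top color m+1 form a set U of sinks;
   removing them leaves a strict coloring of V \ U with m colors. *)
Lemma strict_recursion V m : m < K ->
  n_colorings ltn V m.+1 = \sum_(U : {set I} | U \subset sinks r V) n_colorings ltn (V :\: U) m.
Proof.
move=> mK; rewrite /n_colorings -sum1_card.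
rewrite (partition_big (top_set m.+1) (fun U => U \subset sinks r V)) /=; last first.
  move=> c; rewrite inE => /andP [/colors_onP [pos le] /monotoneP mon].
  apply/subsetP => i; rewrite inE => /eqP ci; apply/sinksP.
  have iV : i \in V by rewrite -pos ci.
  split=> // w wV; apply/negP => /(mon i w iV wV).
  by rewrite /= ci ltnNge le.
apply: eq_bigr => U US; rewrite sum1dep_card.
have UV := subset_trans US (sinks_sub r V).
apply: (card_recolor (U := U) (a := m.+1) (b := 0)) => // c.
- rewrite inE => /andP [/andP [col mon] /eqP top]; apply/andP; split.
    have [_ le] := colors_onP _ _ _ col.
    apply: colors_on_clear col _ => i; rewrite inE -top inE => ne.
    by rewrite -ltnS ltn_neqAle ne le.
  exact: monotone_clear.
- case/andP => col mon; have [pos le] := colors_onP _ _ _ col.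
  rewrite inE; apply/andP; split; first (apply/andP; split).
  + exact: colors_on_fill col.
  + by apply: monotone_fill => // i _; apply: le.
  + apply/eqP; apply/setP => i; rewrite inE recolorE //.
    by case: ifP => iU; rewrite ?eqxx // ltn_eqF // ltnS le.
- by move=> /andP [_ /eqP <-] u; rewrite inE => /eqP.
- case/andP => /colors_onP [pos _] _ u uU; apply/eqP; rewrite eqn0Ngt pos.
  by rewrite inE uU.
Qed.

Lemma weak_top V U m : U \subset sinks r V -> m < K ->
  n_colorings leq (V :\: U) m.+1 =
  #|[set c in colorings leq V m.+1 | U \subset top_set m.+1 c]|.
Proof.
move=> US mK; have UV := subset_trans US (sinks_sub r V).
symmetry; apply: (card_recolor (U := U) (a := m.+1) (b := 0)) => // c.
- rewrite inE => /andP [/andP [col mon] top]; apply/andP; split.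
    have [_ le] := colors_onP _ _ _ col.
    by apply: colors_on_clear col _ => i _; apply: le.
  exact: monotone_clear.
- case/andP => col mon; have [_ le] := colors_onP _ _ _ col.
  rewrite inE; apply/andP; split; first (apply/andP; split).
  + exact: colors_on_fill col.
  + by apply: monotone_fill => // i _; apply: le.
  + by apply/subsetP => i iU; rewrite inE recolorE // iU.
- by move=> /andP [_ /subsetP top] u /top; rewrite inE => /eqP.
- case/andP => /colors_onP [pos _] _ u uU; apply/eqP; rewrite eqn0Ngt pos.
  by rewrite inE uU.
Qed.

(* If r is acyclic, a weak coloring in which no sink has the top color m+1 uses
   no top color at all: the set of top-colored vertices would contain a sink of
   itself, which is a sink of V since weak colorings cannot decrease. *)
Lemma weak_no_top_sink V m : sink_founded r ->
  #|[set c in colorings leq V m.+1 | sinks r V :&: top_set m.+1 c == set0]|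
  = n_colorings leq V m.
Proof.
move=> wf; apply: eq_card => c; rewrite !inE -andbA.
apply/and3P/andP => [[col mon /eqP no_top] | [col mon]]; last first.
  have [pos le] := colors_onP _ _ _ col; split=> //.
    by apply/colors_onP; split=> // i; apply: leqW.
  apply/eqP/setP => i; rewrite !inE; apply/negbTE; rewrite negb_and orbC.
  by rewrite neq_ltn ltnS le.
have [pos le] := colors_onP _ _ _ col; split=> //; apply/colors_onP; split=> // i.
rewrite -ltnS ltn_neqAle le andbT; apply/negP => /eqP ci.
have /wf [v] : [set j in V | c j == m.+1 :> nat] != set0.
  by apply/set0Pn; exists i; rewrite inE ci eqxx -pos ci.
rewrite inE => /andP [vV /eqP cv] v_sink.
suff : v \in sinks r V :&: top_set m.+1 c by rewrite no_top inE.
rewrite !inE cv eqxx andbT vV; apply/forall_inP => w wV; apply/negP => rvw.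
have := v_sink w; rewrite inE wV eqn_leq le -cv (monotoneP _ _ _ _ mon) // => /(_ isT).
by rewrite rvw.
Qed.

(* The weak counterpart of strict_recursion, by inclusion-exclusion over the
   set of sinks having the top color. *)
Lemma weak_alternating (R : ringType) V m : sink_founded r -> m < K ->
  (\sum_(U : {set I} | U \subset sinks r V)
      (-1 : R) ^+ #|U| * (n_colorings leq (V :\: U) m.+1)%:R
   = (n_colorings leq V m)%:R)%R.
Proof.
move=> wf mK; rewrite -weak_no_top_sink //.
rewrite -(@inclusion_exclusion R _ _ _ _ (colorings leq V m.+1)
             (fun c => subsetIl (sinks r V) (top_set m.+1 c))).
apply: eq_bigr => U US; rewrite weak_top //; congr (_ * _%:R)%R.
by apply: eq_card => c; rewrite !inE subsetI US.
Qed.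
End ColoringCounts.

(* Colorings of all of I with colors 'I_k.+1 correspond, by shifting the colors
   up by one, to the encoded colorings of [set: I] with k.+1 colors. *)
Lemma card_monotone_shift (I : finType) (r : rel I) (cmp : rel nat) k :
  (forall a b, cmp a.+1 b.+1 = cmp a b) ->
  #|[set c : {ffun I -> 'I_k.+1} | monotone r cmp setT c]| = n_colorings r k.+1 cmp setT k.+1.
Proof.
move=> cmpS.
have val_pred (x : 'I_k.+2) : 0 < x -> (inord x.-1 : 'I_k.+1) = x.-1 :> nat.
  by move=> x0; rewrite inordK // -ltnS prednK.
apply: (card_bij (f := fun c : {ffun I -> 'I_k.+1} => [ffun i => lift ord0 (c i)])
                 (g := fun c : {ffun I -> 'I_k.+2} => [ffun i => inord (c i).-1])) => c.
all: rewrite !inE.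
- move=> /monotoneP mon; apply/andP; split.
    by apply/colors_onP; split=> i; rewrite ffunE lift0 ?inE.
  by apply/monotoneP => i j iV jV rij; rewrite !ffunE !lift0 cmpS; apply: mon.
- case/andP => /colors_onP [pos _] /monotoneP mon.
  have cpos i : 0 < c i by rewrite pos inE.
  apply/monotoneP => i j _ _ rij; rewrite !ffunE !val_pred // -cmpS !prednK //.
  exact: mon.
- by move=> _; apply/ffunP => i; rewrite !ffunE; apply: val_inj; rewrite /= add0n inordK.
- case/andP => /colors_onP [pos _] _; apply/ffunP => i; rewrite !ffunE; apply: val_inj.
  have cpos : 0 < c i by rewrite pos inE.
  by rewrite /= /bump leq0n add1n val_pred // prednK.
Qed.

Section OrderPolynomialReciprocity.
Variables (R : numFieldType) (I : finType) (r : rel I).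
Hypothesis r_sink_founded : sink_founded r.
Local Open Scope ring_scope.

Definition reciprocal (V : {set I}) (p : {poly R}) : Prop :=
  (forall K m, (m <= K)%N -> p.[m%:R] = (n_colorings r K ltn V m)%:R) /\
  (forall K m, (m <= K)%N ->
     (-1) ^+ #|V| * p.[- m%:R] = (n_colorings r K leq V m)%:R).

(* The sets of vertices that can receive the top color, other than set0. *)
Definition removable (V U : {set I}) : bool := (U != set0) && (U \subset sinks r V).

Lemma removable_card V U : removable V U -> (#|V :\: U| < #|V|)%N.
Proof.
case/andP=> U0 /subset_trans /(_ (sinks_sub r V)) UV.
by rewrite -(cardsID U V) (setIidPr UV) -[X in (X < _)%N]add0n ltn_add2r card_gt0.
Qed.

Lemma sum_sink_subsets V (F : {set I} -> R) :
  \sum_(U : {set I} | U \subset sinks r V) F U = F set0 + \sum_(U | removable V U) F U.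
Proof.
rewrite (bigD1 set0) ?sub0set //=; congr (_ + _).
by apply: eq_bigl => U; rewrite /removable andbC.
Qed.

Lemma sign_setD (V U : {set I}) : U \subset V ->
  (-1 : R) ^+ #|V| = (-1) ^+ #|U| * (-1) ^+ #|V :\: U|.
Proof. by move=> UV; rewrite -exprD -(cardsID U V) (setIidPr UV). Qed.

Section Step.
Variables (V : {set I}) (pU : {set I} -> {poly R}) (p : {poly R}).
Hypothesis pU_reciprocal : forall U, removable V U -> reciprocal (V :\: U) (pU U).
Hypothesis p_at0 : p.[0] = (V == set0)%:R.
Hypothesis p_diff : forall x, p.[x + 1] - p.[x] = \sum_(U | removable V U) (pU U).[x].

Lemma step_strict K m : (m <= K)%N -> p.[m%:R] = (n_colorings r K ltn V m)%:R.
Proof.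
elim: m => [|m IHm] mK; first by rewrite p_at0 n_colorings0.
rewrite strict_recursion // natr_sum (sum_sink_subsets V) setD0 -IHm 1?ltnW // -natr1.
have -> : p.[m%:R + 1] = p.[m%:R] + \sum_(U | removable V U) (pU U).[m%:R].
  by rewrite -p_diff [RHS]addrC subrK.
congr (_ + _); apply: eq_bigr => U /pU_reciprocal [strict _].
by rewrite (strict K) 1?ltnW.
Qed.

Lemma step_weak K m : (m <= K)%N ->
  (-1) ^+ #|V| * p.[- m%:R] = (n_colorings r K leq V m)%:R.
Proof.
elim: m => [|m IHm] mK.
  rewrite oppr0 p_at0 n_colorings0; have [->|_] := eqVneq V set0.
    by rewrite cards0 expr0 mul1r.
  by rewrite /= mulr0n mulr0.
have shift : p.[- m.+1%:R] = p.[- m%:R] - \sum_(U | removable V U) (pU U).[- m.+1%:R].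
  have e : - m.+1%:R + 1 = - m%:R :> R by rewrite -natr1 opprD subrK.
  by rewrite -p_diff e opprB addrCA subrr addr0.
rewrite shift mulrBr IHm 1?ltnW // -(weak_alternating R V r_sink_founded mK).
rewrite (sum_sink_subsets V) setD0 cards0 expr0 mul1r -addrA.
rewrite mulr_sumr -sumrB big1 ?addr0 // => U remU.
have [_ weak] := pU_reciprocal remU.
have UV : U \subset V by case/andP: remU => _ /subset_trans; apply; apply: sinks_sub.
by rewrite (sign_setD UV) -mulrA (weak K m.+1 mK) subrr.
Qed.
End Step.

Lemma order_polynomial V : exists p : {poly R}, reciprocal V p.
Proof.
elim: {V}_.+1 {-2}V (ltnSn #|V|) => // n IHn V /ltnSE leVn.
have /fin_all_exists [pU pU_rec] :
    forall U, exists q : {poly R}, removable V U -> reciprocal (V :\: U) q.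
  move=> U; have [remU|_] := boolP (removable V U); last by exists 0.
  have [q rq] := IHn (V :\: U) (leq_trans (removable_card remU) leVn).
  by exists q.
have [a [a0 da]] := discrete_antiderivative (\sum_(U | removable V U) pU U).
pose p := (V == set0)%:R%:P + a.
have p_at0 : p.[0] = (V == set0)%:R by rewrite hornerD hornerC a0 addr0.
have p_diff x : p.[x + 1] - p.[x] = \sum_(U | removable V U) (pU U).[x].
  by rewrite !hornerD !hornerC opprD addrACA subrr add0r da horner_sum.
exists p; split; first exact: (step_strict pU_rec p_at0 p_diff).
exact: (step_weak pU_rec p_at0 p_diff).
Qed.
End OrderPolynomialReciprocity.

Section Hypergraph.
Variables (I E : finType) (edge : E -> {set I}).
Implicit Types (s : {ffun E -> I}).

Definition head_rel (s : {ffun E -> I}) : rel I :=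
  [rel i j | [exists e, [&& s e == j, i \in edge e & i != j]]].

Lemma head_relP s i j :
  reflect (exists e, [/\ s e = j, i \in edge e & i != j]) (head_rel s i j).
Proof.
apply: (iffP existsP) => [[e /and3P [/eqP sej ie neq]] | [e [sej ie neq]]]; exists e => //.
by rewrite sej eqxx ie neq.
Qed.

(* A heading admitting a strictly increasing labelling is acyclic: along an
   oriented cycle the labels of the heads would increase forever. *)
Lemma increasing_acyclic s (f : I -> nat) :
  (forall i j, head_rel s i j -> f i < f j) -> acyclic edge s.
Proof.
move=> incr [l [h [l0 cyc]]].
pose a k := f (s (h (k %% l))).
have step k : a k < a k.+1.
  have := cyc (k %% l) (ltn_pmod k l0); rewrite -addn1 modnDml addn1 !inE.
  case/andP => neq ie; rewrite /a; apply: incr; apply/head_relP.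
  by exists (h (k.+1 %% l)).
have grow n : a 0 + n <= a n.
  by elim: n => [|n IH]; rewrite ?addn0 // addnS (leq_ltn_trans IH (step n)).
by move: (grow l); rewrite /a modnn mod0n -[X in _ <= X]addn0 leq_add2l leqn0 eqn0Ngt l0.
Qed.

(* Conversely an acyclic heading has a sink-founded head relation: a set
   without sinks carries a closed walk, which yields an oriented cycle. *)
Lemma acyclic_sink_founded s : acyclic edge s -> sink_founded (head_rel s).
Proof.
move=> ac X X0.
have [/exists_inP [v vX /forall_inP v_sink] | no_sink] :=
  boolP [exists v in X, [forall w in X, ~~ head_rel s v w]]; first by exists v.
case: ac.
have succ v : v \in X -> exists2 w, w \in X & head_rel s v w.
  move=> vX; move: no_sink; rewrite negb_exists_in => /forall_inP /(_ v vX).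
  by rewrite negb_forall_in => /exists_inP [w wX]; rewrite negbK; exists w.
have [l [y [l0 walk period]]] := periodic_walk X0 succ.
have [e0 _] : exists e : E, true by case/head_relP: (walk 0) => e _; exists e.
pose h k := odflt e0 [pick e | [&& s e == y k.+1, y k \in edge e & y k != y k.+1]].
have hP k : [/\ s (h k) = y k.+1, y k \in edge (h k) & y k != y k.+1].
  rewrite /h; case: pickP => [e /and3P [/eqP -> ? ?] // | none].
  by case/head_relP: (walk k) => e [sej ie neq]; move: (none e); rewrite sej eqxx ie neq.
have hmod k : h (k %% l) = h k.
  have ek : k %% l = k %[mod l] by rewrite modn_mod.
  have eSk : (k %% l).+1 = k.+1 %[mod l] by rewrite -addn1 -[k.+1]addn1 modnDml.
  by rewrite /h (period _ _ ek) (period _ _ eSk).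
exists l, h; split=> // j _; rewrite hmod.
have [-> _ _] := hP j; have [-> ie neq] := hP j.+1.
by rewrite !inE neq ie.
Qed.

Section HeadingsOfColorings.
Variable m : nat.
Implicit Types (c : {ffun I -> 'I_m}).

Definition argmax_set c e : {set I} := [set i in edge e | (c i : nat) == emax edge c e].

Lemma emax_ge c e i : i \in edge e -> c i <= emax edge c e.
Proof. by move=> ie; apply: (@leq_bigmax_cond _ (fun j => j \in edge e)). Qed.

Lemma emax_attained s c e : s e \in edge e ->
  (forall i, i \in edge e -> i != s e -> c i <= c (s e)) -> c (s e) = emax edge c e :> nat.
Proof.
move=> se le_se; apply/eqP; rewrite eqn_leq emax_ge //=.
by apply/bigmax_leqP => i ie; have [->|ne] := eqVneq i (s e); last apply: le_se.
Qed.

Lemma compatible_weak s c : heading edge s ->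
  compatible edge c s <-> monotone (head_rel s) leq setT c.
Proof.
move=> hs; split=> [cs | /monotoneP mon e].
  by apply/monotoneP => i j _ _ /head_relP [e [<- ie _]]; rewrite cs emax_ge.
by apply: emax_attained => // i ie ne; apply: mon => //; apply/head_relP; exists e.
Qed.

Lemma strict_argmax s c e : heading edge s -> monotone (head_rel s) ltn setT c ->
  argmax_set c e = [set s e].
Proof.
move=> hs /monotoneP mon.
have ri i : i \in edge e -> i != s e -> c i < c (s e).
  by move=> ie ne; apply: mon => //; apply/head_relP; exists e.
have cs := emax_attained (hs e) (fun i ie ne => ltnW (ri i ie ne)).
apply/setP => i; rewrite !inE -cs; apply/andP/eqP => [[ie /eqP ci] | ->]; last first.
  by rewrite hs eqxx.
by apply/eqP/negPn/negP => /(ri i ie); rewrite ci ltnn.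
Qed.

Lemma strict_proper s c : heading edge s -> monotone (head_rel s) ltn setT c ->
  proper_coloring edge c.
Proof.
move=> hs mon; apply/forallP => e.
by have := strict_argmax e hs mon; rewrite /argmax_set => ->; rewrite cards1.
Qed.

Lemma proper_heading c : proper_coloring edge c ->
  exists2 s, heading edge s & monotone (head_rel s) ltn setT c.
Proof.
move=> /forallP proper.
have /fin_all_exists [f fP] : forall e, exists i, argmax_set c e = [set i].
  by move=> e; apply/cards1P; apply: proper.
pose s := [ffun e => f e].
have in_argmax e : s e \in argmax_set c e by rewrite ffunE fP set11.
exists s => [e|]; first by have := in_argmax e; rewrite inE => /andP [].
apply/monotoneP => i j _ _ /head_relP [e [<- ie ne]].
have := in_argmax e; rewrite inE => /andP [_ /eqP cs].
rewrite /= ltn_neqAle cs emax_ge // andbT; apply: contra ne => /eqP ci.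
have : i \in argmax_set c e by rewrite inE ie ci eqxx.
by rewrite fP inE ffunE.
Qed.
End HeadingsOfColorings.

Definition acyclic_heading s : bool := `[< heading edge s /\ acyclic edge s >].

(* Proper colorings correspond to pairs (acyclic heading, strictly increasing
   coloring), the heading being recovered from the coloring. *)
Lemma n_proper_sum m : n_proper edge m =
  \sum_(s | acyclic_heading s) #|[set c : {ffun I -> 'I_m} | monotone (head_rel s) ltn setT c]|.
Proof.
rewrite -card_pairs -(card_in_imset (f := snd)); last first.
  move=> [s c] [s' c']; rewrite !inE /=.
  move=> /andP [/asboolP [hs _] mon] /andP [/asboolP [hs' _] mon'] /= eq_c.
  rewrite -eq_c in mon' *; congr pair; apply/ffunP => e.
  by apply: set1_inj; rewrite -(strict_argmax e hs mon) -(strict_argmax e hs' mon').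
apply: eq_card => c; rewrite inE.
apply/idP/imsetP => [/proper_heading [s hs mon] | [[s c'] + ->]].
  exists (s, c) => //; rewrite inE /= mon andbT; apply/asboolP; split=> //.
  apply: (increasing_acyclic (f := fun i => c i)) => i j rij.
  exact: (monotoneP _ _ _ _ mon).
by rewrite inE => /andP [/asboolP [hs _] mon]; apply: strict_proper hs mon.
Qed.

Lemma n_pairs_sum m : n_pairs edge m =
  \sum_(s | acyclic_heading s) #|[set c : {ffun I -> 'I_m} | monotone (head_rel s) leq setT c]|.
Proof.
rewrite -card_pairs; apply: eq_card => -[s c]; rewrite !inE /=.
apply/asboolP/andP => [[hs [ac cs]] | [/asboolP [hs ac] mon]].
  by split; [apply/asboolP | apply/compatible_weak].
by split=> //; split=> //; apply/compatible_weak.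
Qed.

(* With a single color every heading has exactly one compatible coloring. *)
Lemma n_acyclic_headings_pairs : n_acyclic_headings edge = n_pairs edge 1.
Proof.
rewrite n_pairs_sum /n_acyclic_headings -sum1dep_card; apply: eq_bigr => s _.
symmetry; apply: (@eq_card1 _ [ffun => ord0]) => c; rewrite inE.
have -> : c = [ffun => ord0] by apply/ffunP => i; rewrite ffunE ord1.
by rewrite !inE eqxx; apply/monotoneP => i j _ _ _; rewrite !ffunE.
Qed.
End Hypergraph.

Local Open Scope ring_scope.

(* Reciprocity for the chromatic polynomial of a hypergraph, over any numeric
   field: sum the reciprocal order polynomials of the acyclic headings. *)
Lemma chromatic_reciprocity (R : numFieldType) (I E : finType) (edge : E -> {set I}) :
  exists chi : {poly R},
    (forall m : nat, (0 < m)%N -> chi.[m%:R] = (n_proper edge m)%:R) /\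
    (forall m : nat, (0 < m)%N -> (-1) ^+ #|I| * chi.[- m%:R] = (n_pairs edge m)%:R).
Proof.
have /fin_all_exists [p pP] : forall s : {ffun E -> I}, exists p : {poly R},
    acyclic_heading edge s -> reciprocal (head_rel edge s) setT p.
  move=> s; have [/asboolP [_ ac] | _] := boolP (acyclic_heading edge s); last by exists 0.
  by have [q rq] := order_polynomial R (acyclic_sink_founded ac) setT; exists q.
exists (\sum_(s | acyclic_heading edge s) p s); split=> -[|k] // _.
  rewrite horner_sum n_proper_sum natr_sum; apply: eq_bigr => s /pP [strict _].
  by rewrite (strict k.+1) // card_monotone_shift.
rewrite horner_sum mulr_sumr n_pairs_sum natr_sum; apply: eq_bigr => s /pP [_ weak].
by rewrite -cardsT (weak k.+1) // card_monotone_shift.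
Qed.

Unset Implicit Arguments.

Theorem mainTheorem10 (I E : finType) (edge : E -> {set I})
  (Hne : forall e : E, edge e != set0) :
  (exists chi : {poly rat}, forall m : nat, (0 < m)%N ->
       chi.[m%:R] = (n_proper edge m)%:R) /\
  (forall chi : {poly rat},
     (forall m : nat, (0 < m)%N -> chi.[m%:R] = (n_proper edge m)%:R) ->
     (forall m : nat, (0 < m)%N ->
        (-1) ^+ #|I| * chi.[- m%:R] = (n_pairs edge m)%:R) /\
     (-1) ^+ #|I| * chi.[-1] = (n_acyclic_headings edge)%:R).
Proof.
have [chi0 [chi0_pos chi0_neg]] := chromatic_reciprocity rat edge.
split=> [|chi chi_pos]; first by exists chi0.
have -> : chi = chi0 by apply: poly_eq_nat => m m0; rewrite chi_pos ?chi0_pos.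
by split=> //; rewrite n_acyclic_headings_pairs -chi0_neg.
Qed.
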